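(* Consider a finite Markov decision process with state set $\mathcal S$, action set $\mathcal A$, transition function $P$, reward function $R$, initial state distribution $d_0$ and discount factor $\gamma\in[0,1)$, together with a finite set of options $\mathcal O$ in which every option $o$ has an intra-option policy $\pi_o(s,a,\theta)$ (a probability distribution over $a\in\mathcal A$ for each $s$), differentiable in a parameter vector $\theta$, a termination function $\beta_o(s)\in[0,1]$, and a policy over options $\pi_{\mathcal O}(s,o)$. Let $X=(S_0,O_0,A_0,S_1,O_1,A_1,\dots)$ be the random path generated by the option dynamics described in the context, and for $\mathcal T\in\mathbb N$ let $G^{\mathcal T}_\theta$ be the $\mathcal T$-step finite horizon Fisher information matrix with respect to $\theta$, i.e. the Fisher information matrix of the distribution of the path truncated to terminate at time step $\mathcal T$: $$\big(G^{\mathcal T}_\theta\big)_{i,j}=\mathbb E\Big[\frac{\partial \ln \Pr(X_{0:\mathcal T};\theta)}{\partial\theta_i}\frac{\partial \ln \Pr(X_{0:\mathcal T};\theta)}{\partial\theta_j}\Big] .$$ Let $\mu_{\mathcal O}(s,o)$ denote the stationary distribution of state-option pairs $(s,o)$ of this process. Then $$\lim_{\mathcal T\to\infty}\frac{1}{\mathcal T}G^{\mathcal T}_\theta=\langle G_\theta\rangle_{\mu_{\mathcal O}(s,o)},\qquad\text{where}\qquad \big(\langle G_\theta\rangle_{\mu_{\mathcal O}(s,o)}\big)_{i,j}=\sum_{s,o}\mu_{\mathcal O}(s,o)\sum_{a}\pi_o(s,a,\theta)\,\frac{\partial\ln\pi_o(s,a,\theta)}{\partial\theta_i}\frac{\partial\ln\pi_o(s,a,\theta)}{\partial\theta_j},$$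 i.e. the limit equals the Fisher information matrix of the intra-option policies under the stationary distribution $\pi_o(s,a,\theta)\mu_{\mathcal O}(s,o)$ of states, options and actions.
   Context: Option dynamics (option-critic framework, all options available in every state): at time $t$ the agent is in state $S_t$ with active option $O_t$; it draws $A_t\sim\pi_{O_t}(S_t,\cdot,\theta)$, receives a reward $R_t$ with $\mathbb E[R_t\mid S_t=s,A_t=a]=R(s,a)$, and the environment moves to $S_{t+1}\sim P(S_t,A_t,\cdot)$. The next option is then drawn with probability $\Pr(O_{t+1}=o'\mid O_t=o,S_{t+1}=s')=(1-\beta_o(s'))\mathbf 1_{o'=o}+\beta_o(s')\pi_{\mathcal O}(s',o')$. The initial pair $(S_0,O_0)=(s_0,o_0)$ is given. The discounted problem is treated as an undiscounted one in which the process terminates with probability $1-\gamma$ at each step. The process of state-option pairs is assumed ergodic and irreducible, so that $\mu_{\mathcal O}(s,o)$ is a well-defined stationary distribution. *)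

From HB Require Import structures.
From mathcomp Require Import all_boot all_order all_algebra.
From mathcomp Require Import all_classical all_reals all_analysis.
Set Implicit Arguments. Unset Strict Implicit. Unset Printing Implicit Defensive.
Import Order.TTheory GRing.Theory Num.Theory.
Import numFieldNormedType.Exports.
Local Open Scope ring_scope.

Section OptionDynamics.
Variables (R : realType) (n : nat) (S A O : finType).
Variable pi : O -> S -> A -> 'rV[R]_n -> R.
Variable P : S -> A -> S -> R.
Variable beta : O -> S -> R.
Variable piO : S -> O -> R.

(* Pr(O_{t+1} = o' | O_t = o, S_{t+1} = s') *)
Definition opt_trans (o : O) (s' : S) (o' : O) : R :=
  (1 - beta o s') * (o' == o)%:R + beta o s' * piO s' o'.

Definition so_kernel (theta : 'rV[R]_n) (x y : S * O) : R :=
  \sum_(a : A) pi x.2 x.1 a theta * P x.1 a y.1 * opt_trans x.2 y.1 y.2.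

Fixpoint kpow (T : finType) (K : T -> T -> R) (m : nat) (x y : T) : R :=
  match m with
  | 0 => (x == y)%:R
  | m'.+1 => \sum_(z : T) kpow K m' x z * K z y
  end.

Definition irreducible_chain (T : finType) (K : T -> T -> R) : Prop :=
  forall x y : T, exists m : nat, 0 < kpow K m x y.

Definition aperiodic_chain (T : finType) (K : T -> T -> R) : Prop :=
  forall x : T, forall d : nat,
    (forall m : nat, (0 < m)%N -> 0 < kpow K m x x -> (d %| m)%N) -> d = 1%N.

Definition ergodic_chain (T : finType) (K : T -> T -> R) : Prop :=
  irreducible_chain K /\ aperiodic_chain K.

Definition stationary_so (theta : 'rV[R]_n) (mu : S -> O -> R) : Prop :=
  (forall s o, 0 <= mu s o) /\ (\sum_(s : S) \sum_(o : O) mu s o = 1) /\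
  (forall s' o', \sum_(s : S) \sum_(o : O) mu s o * so_kernel theta (s, o) (s', o')
                 = mu s' o').

(* probability of a path segment (s_t,o_t,a_t),(s_{t+1},...),... given
   (S_t,O_t) = (s_t,o_t) *)
Fixpoint path_prob_from (theta : 'rV[R]_n) (x : S * O * A) (xs : seq (S * O * A))
  : R :=
  let: (s, o, a) := x in
  match xs with
  | [::] => pi o s a theta
  | y :: ys =>
      pi o s a theta * P s a y.1.1 * opt_trans o y.1.1 y.1.2
      * path_prob_from theta y ys
  end.

(* Pr(X_{0:T} = xs ; theta), with (S_0,O_0) = (s0,o0) given *)
Definition path_prob (s0 : S) (o0 : O) (theta : 'rV[R]_n) (xs : seq (S * O * A))
  : R :=
  match xs with
  | [::] => 1
  | x :: xs' => ((x.1.1 == s0) && (x.1.2 == o0))%:R * path_prob_from theta x xs'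
  end.

Definition coord_dir (i : 'I_n) : 'rV[R]_n := delta_mx 0 i.

Definition pderiv (f : 'rV[R]_n -> R) (theta : 'rV[R]_n) (i : 'I_n) : R :=
  derive f theta (coord_dir i).

(* T-step finite horizon Fisher information matrix: the path X_{0:T}
   consists of the T triples (S_t, O_t, A_t), t = 0 .. T-1 *)
Definition fisher_T (s0 : S) (o0 : O) (theta : 'rV[R]_n) (T : nat) (i j : 'I_n) : R :=
  \sum_(xs : T.-tuple (S * O * A))
    path_prob s0 o0 theta xs
    * pderiv (fun th => ln (path_prob s0 o0 th xs)) theta i
    * pderiv (fun th => ln (path_prob s0 o0 th xs)) theta j.

Definition fisher_avg (mu : S -> O -> R) (theta : 'rV[R]_n) (i j : 'I_n) : R :=
  \sum_(s : S) \sum_(o : O) mu s o *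
    \sum_(a : A) pi o s a theta
      * pderiv (fun th => ln (pi o s a th)) theta i
      * pderiv (fun th => ln (pi o s a th)) theta j.

End OptionDynamics.

From HB Require Import structures.
From mathcomp Require Import all_boot all_order all_algebra.
From mathcomp Require Import all_classical all_reals all_analysis.
From mathcomp Require Import ring lra.
Import Order.TTheory GRing.Theory Num.Theory.
Import numFieldNormedType.Exports.
Set Implicit Arguments. Unset Strict Implicit. Unset Printing Implicit Defensive.
Local Open Scope classical_set_scope.
Local Open Scope ring_scope.

(* Only the intra-option policies depend on theta, so the score of a path is
   the sum of the scores of its actions, each of which has conditional mean zero
   given the past.  Hence the cross terms of the T-step Fisher matrix vanish and
   it equals sum_(t < T) (K^t F)(s0, o0), where K is the kernel of the
   state-option chain and F(s, o) the Fisher matrix of pi_o(s, .).  For an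
   irreducible finite chain, I - K is boundedly invertible on functions of
   mu-mean zero, so the partial sums of K^t (F - mu F) stay bounded and the
   Cesaro means converge to mu F. *)

Section DirectionalDerivative.
Variables (R : realType) (V : normedModType R).
Implicit Types (f : V -> R) (x v : V).

Lemma derive_line f x v : 'D_v f x = 'D_1 (fun h : R => f (h *: v + x)) 0.
Proof.
rewrite /derive; congr lim; apply: f_equal2 => //; apply/funext => h /=.
by rewrite scale0r add0r addr0 [_%:A]mulr1.
Qed.

Lemma derive_ln f x v : derivable f x v -> 0 < f x ->
  'D_v (fun t => ln (f t)) x = 'D_v f x / f x.
Proof.
move=> df fx_gt0; rewrite !derive_line -!derive1E.
set g := fun h : R => f (h *: v + x).
have dg : derivable g 0 1 := (derivable1P f x v).1 df.
have g0 : g 0 = f x by rewrite /g scale0r add0r.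
have dln : derivable (@ln R) (g 0) 1 by rewrite g0; case: (is_derive1_ln fx_gt0).
rewrite (derive1_comp dg dln) g0 derive1E.
by rewrite (@derive_val _ _ _ _ _ _ _ (is_derive1_ln fx_gt0)) mulrC.
Qed.

Lemma derive_at_min f x v : (forall t, differentiable f t) ->
  (forall t, f x <= f t) -> 'D_v f x = 0.
Proof.
move=> df fx_min; rewrite derive_line.
set g := fun h : R => f (h *: v + x).
suff dg0 : is_derive (0 : R) 1 g 0 by rewrite derive_val.
apply: (@derive1_at_min _ g (-1) 1) => [|t _||t _]; first lra.
- by apply/derivable1_diffP; apply: differentiable_comp.
- by rewrite in_itv /=; apply/andP; split; lra.
- by rewrite /g scale0r add0r.
Qed.

Lemma is_derive_bigsum (W : normedModType R) (I : finType) (h : I -> V -> W)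
    x v (dh : I -> W) :
  (forall i, is_derive x v (h i) (dh i)) ->
  is_derive x v (fun t => \sum_i h i t) (\sum_i dh i).
Proof.
rewrite -fct_sumE.
by elim/big_ind2 : _ => // [|] *; [exact: is_derive_cst|exact: is_deriveD].
Qed.

End DirectionalDerivative.

Lemma cvg_harmonicM_bounded (R : realType) (u : R ^nat) (M : R) :
  (forall T, `|u T| <= M) -> (fun T => harmonic T * u T) @ \oo --> 0.
Proof.
move=> uM; apply: norm_cvg0.
apply: (@squeeze_cvgr _ _ _ _ (cst 0) (fun T => M * harmonic T)).
- near=> T; rewrite normr_ge0 /= normrM ger0_norm ?harmonic_ge0 //.
  by rewrite mulrC ler_wpM2r ?harmonic_ge0.
- exact: cvg_cst.
- by rewrite -(mulr0 M); apply: cvgMl_tmp; exact: cvg_harmonic.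
Unshelve. all: by end_near.
Qed.

Section FiniteSums.
Variable V : nmodType.

Lemma sum_pair (I J : finType) (F : I * J -> V) :
  \sum_p F p = \sum_i \sum_j F (i, j).
Proof. by rewrite pair_bigA; apply: eq_bigr => -[]. Qed.

Lemma sum_tuple0 (T : finType) (F : seq T -> V) :
  \sum_(t : 0.-tuple T) F t = F [::].
Proof. by rewrite (big_pred1 [tuple]) // => t; apply/esym/eqP/tuple0. Qed.

Lemma sum_tupleS (T : finType) m (F : seq T -> V) :
  \sum_(t : m.+1.-tuple T) F t = \sum_(x : T) \sum_(t : m.-tuple T) F (x :: t).
Proof.
rewrite pair_bigA /= (reindex (fun p : T * m.-tuple T => [tuple of p.1 :: p.2])) //.
exists (fun t => (thead t, behead_tuple t)).
  by move=> [x t] _ /=; rewrite theadE; congr pair; apply: val_inj.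
by move=> t _; rewrite /= -tuple_eta.
Qed.

End FiniteSums.

Section IndicatorSums.
Variable R : pzSemiRingType.

Lemma sum_delta (X : finType) (x : X) (f : X -> R) : \sum_y (x == y)%:R * f y = f x.
Proof.
rewrite (bigD1 x) //= eqxx mul1r big1 ?addr0 // => y.
by rewrite eq_sym => /negbTE ->; rewrite mul0r.
Qed.

Lemma sum_pair_delta (I J : finType) (i0 : I) (j0 : J) (F : I -> J -> R) :
  \sum_i \sum_j ((i == i0) && (j == j0))%:R * F i j = F i0 j0.
Proof.
rewrite (bigD1 i0) //= [X in _ + X]big1 ?addr0 => [|i i_ne]; last first.
  by rewrite big1 // => j _; rewrite (negbTE i_ne) mul0r.
rewrite -[RHS](sum_delta j0 (F i0)); apply: eq_bigr => j _.
by rewrite eqxx eq_sym.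
Qed.

End IndicatorSums.

Section MarkovOperator.
Variables (R : realType) (X : finType) (K : X -> X -> R).
Hypotheses (K_ge0 : forall x y, 0 <= K x y) (K_sum1 : forall x, \sum_y K x y = 1).

Definition kact (f : X -> R) x := \sum_y K x y * f y.
Definition kact_pow m (f : X -> R) x := \sum_y kpow K m x y * f y.

Lemma kpow_ge0 m x y : 0 <= kpow K m x y.
Proof.
elim: m y => [|m IH] y /=; first exact: ler0n.
by apply: sumr_ge0 => z _; apply: mulr_ge0.
Qed.

Lemma kpow_sum1 m x : \sum_y kpow K m x y = 1.
Proof.
elim: m => [|m IH] /=.
  by rewrite -[RHS](sum_delta x (fun=> 1)); apply: eq_bigr => y _; rewrite mulr1.
rewrite exchange_big /= -[RHS]IH; apply: eq_bigr => z _.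
by rewrite -big_distrr /= K_sum1 mulr1.
Qed.

Lemma kpowS m x y : kpow K m.+1 x y = \sum_z kpow K m x z * K z y.
Proof. by []. Qed.

Lemma kpowSl m x y : kpow K m.+1 x y = \sum_z K x z * kpow K m z y.
Proof.
elim: m y => [|m IH] y.
  rewrite kpowS /= sum_delta; under eq_bigr do rewrite mulrC eq_sym.
  by rewrite sum_delta.
rewrite kpowS; under eq_bigr do rewrite IH big_distrl /=.
rewrite exchange_big /=; apply: eq_bigr => z _.
by rewrite big_distrr /=; apply: eq_bigr => w _; rewrite mulrA.
Qed.

Lemma kact0 x : kact (fun=> 0) x = 0.
Proof. by rewrite /kact big1 // => y _; rewrite mulr0. Qed.

Lemma kact_pow0 f x : kact_pow 0%N f x = f x.
Proof. exact: sum_delta. Qed.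

Lemma kact_powS m f x : kact_pow m.+1 f x = kact_pow m (kact f) x.
Proof.
rewrite /kact_pow /kact /=.
under eq_bigr do rewrite big_distrl /=.
rewrite exchange_big /=; apply: eq_bigr => z _.
by rewrite big_distrr /=; apply: eq_bigr => w _; rewrite mulrA.
Qed.

Lemma kact_powSl m f x : kact_pow m.+1 f x = kact (kact_pow m f) x.
Proof.
rewrite /kact_pow /kact.
under eq_bigr do rewrite kpowSl big_distrl /=.
rewrite exchange_big /=; apply: eq_bigr => z _.
by rewrite big_distrr /=; apply: eq_bigr => w _; rewrite mulrA.
Qed.

Lemma kact_pow_cst m c x : kact_pow m (fun=> c) x = c.
Proof. by rewrite /kact_pow -big_distrl /= kpow_sum1 mul1r. Qed.

Lemma kact_powB m f g x :
  kact_pow m (fun y => f y - g y) x = kact_pow m f x - kact_pow m g x.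
Proof. by rewrite /kact_pow -sumrB; apply: eq_bigr => y _; rewrite mulrBr. Qed.

Lemma kact_pow_norm_le m f B x : (forall y, `|f y| <= B) -> `|kact_pow m f x| <= B.
Proof.
move=> fB; apply: le_trans (ler_norm_sum _ _ _) _.
rewrite -[leRHS]mul1r -(kpow_sum1 m x) big_distrl /=.
apply: ler_sum => y _; rewrite normrM ger0_norm ?kpow_ge0 //.
by rewrite ler_wpM2l ?kpow_ge0.
Qed.

Lemma kact_pow_telescope m f x :
  kact_pow m f x - f x = \sum_(k < m) kact_pow k (fun y => kact f y - f y) x.
Proof.
rewrite -[in LHS](kact_pow0 f x) -(telescope_sumr (fun k => kact_pow k f x)) //.
by rewrite big_mkord; apply: eq_bigr => k _; rewrite kact_powB kact_powS.
Qed.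

(* Bound [g x - kact_pow m g x] below by maximality of [g x] and above by
   telescoping it into [m] increments of [kact g - g]. *)
Lemma kpow_oscillation_le g eps m x y :
  (forall z, g z <= g x) -> (forall z, `|kact g z - g z| <= eps) ->
  kpow K m x y * (g x - g y) <= m%:R * eps.
Proof.
move=> g_max g_eps.
have drift : g x - kact_pow m g x <= m%:R * eps.
  rewrite -opprB kact_pow_telescope -sumrN.
  rewrite mulr_natl -[X in _ *+ X]card_ord -sumr_const.
  apply: ler_sum => k _; apply: le_trans (ler_norm _) _.
  by rewrite normrN kact_pow_norm_le.
apply: le_trans drift.
rewrite /kact_pow -[X in _ <= X - _]mul1r -(kpow_sum1 m x) big_distrl /= -sumrB.
rewrite (bigD1 y) //= -mulrBr lerDl.
by apply: sumr_ge0 => z _; rewrite -mulrBr mulr_ge0 ?kpow_ge0 // subr_ge0.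
Qed.

Variable mu : X -> R.
Hypotheses (mu_ge0 : forall x, 0 <= mu x) (mu_sum1 : \sum_x mu x = 1)
  (mu_stat : forall y, \sum_x mu x * K x y = mu y).

Lemma stationary_kact_pow m f : \sum_x mu x * kact_pow m f x = \sum_x mu x * f x.
Proof.
elim: m f => [|m IH] f; first by apply: eq_bigr => x _; rewrite kact_pow0.
under eq_bigr do rewrite kact_powSl.
rewrite -IH /kact /kact_pow.
under eq_bigr do rewrite big_distrr /=.
rewrite exchange_big /=; apply: eq_bigr => y _.
rewrite -mu_stat big_distrl /=; apply: eq_bigr => z _.
by rewrite !mulrA.
Qed.

Hypothesis K_irr : irreducible_chain K.

Lemma irreducible_hitting_bound : exists C, forall x y, exists m,
  0 < kpow K m x y /\ m%:R <= C * kpow K m x y.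
Proof.
have [mf mf_pos] : exists mf : X -> X -> nat, forall x y, 0 < kpow K (mf x y) x y.
  by exists (fun x y => ex_minn (K_irr x y)) => x y; case: ex_minnP.
exists (\sum_x \sum_y (mf x y)%:R / kpow K (mf x y) x y) => x y.
exists (mf x y); split; first exact: mf_pos.
have term_ge0 z w : 0 <= (mf z w)%:R / kpow K (mf z w) z w.
  by rewrite divr_ge0 ?kpow_ge0.
rewrite -ler_pdivrMr // (bigD1 x) //= (bigD1 y) //= -addrA lerDl.
by rewrite addr_ge0 ?sumr_ge0 // => z _; rewrite ?sumr_ge0.
Qed.

Lemma mean0_norm_le_kact_sub :
  exists C, forall g eps, \sum_x mu x * g x = 0 ->
    (forall x, `|kact g x - g x| <= eps) -> forall z, `|g z| <= C * eps.
Proof.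
have [C C_hit] := irreducible_hitting_bound.
exists C => g eps g_mean0 g_eps z.
have [xM _ g_max] := @arg_maxP _ R X z xpredT g isT.
have [xm _ g_min] := @arg_minP _ R X z xpredT g isT.
have {}g_max y : g y <= g xM by exact: g_max.
have {}g_min y : g xm <= g y by exact: g_min.
have mean_dev (c : R) : \sum_x mu x * (g x - c) = - c.
  under eq_bigr do rewrite mulrBr.
  by rewrite sumrB g_mean0 -big_distrl /= mu_sum1 mul1r sub0r.
have gM_ge0 : 0 <= g xM.
  rewrite -[g xM]opprK -(mean_dev (g xM)) oppr_ge0 sumr_le0 // => x _.
  by rewrite mulr_ge0_le0 // subr_le0 g_max.
have gm_le0 : g xm <= 0.
  rewrite -[g xm]opprK -(mean_dev (g xm)) oppr_le0 sumr_ge0 // => x _.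
  by rewrite mulr_ge0 // subr_ge0 g_min.
have [m [hit_pos hit_le]] := C_hit xM xm.
have osc : g xM - g xm <= C * eps.
  rewrite -(@ler_pM2l _ (kpow K m xM xm)) //.
  apply: le_trans (kpow_oscillation_le m xm g_max g_eps) _.
  have eps_ge0 : 0 <= eps by apply: le_trans (g_eps z).
  by rewrite mulrA [_ * C]mulrC; apply: ler_wpM2r.
have := g_max z; have := g_min z; rewrite ler_norml; lra.
Qed.

Lemma mean0_kact_pow_sum_bounded f : \sum_y mu y * f y = 0 ->
  exists M, forall T x, `|\sum_(t < T) kact_pow t f x| <= M.
Proof.
move=> f_mean0; pose G T y := \sum_(t < T) kact_pow t f y.
have G_mean0 T : \sum_y mu y * G T y = 0.
  rewrite /G; under eq_bigr do rewrite big_distrr.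
  by rewrite exchange_big big1 // => t _; rewrite stationary_kact_pow.
have kact_G T y : kact (G T) y - G T y = kact_pow T f y - f y.
  rewrite -(kact_pow0 f y) -(telescope_sumr (fun t => kact_pow t f y)) //.
  rewrite big_mkord /G /kact sumrB; congr (_ - _).
  under eq_bigr do rewrite big_distrr.
  by rewrite exchange_big; apply: eq_bigr => t _; rewrite kact_powSl.
pose B := \sum_y `|f y|.
have f_le y : `|f y| <= B by rewrite /B (bigD1 y) //= lerDl sumr_ge0.
have [C C_bound] := mean0_norm_le_kact_sub.
exists (C * (B + B)) => T x; apply: C_bound (G_mean0 T) _ _ => y.
rewrite kact_G; apply: le_trans (ler_normB _ _) _.
by rewrite lerD // kact_pow_norm_le.
Qed.

Lemma cesaro_kact_pow_cvg F x :
  (fun T => T%:R^-1 * \sum_(t < T) kact_pow t F x) @ \oo --> \sum_y mu y * F y.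
Proof.
set c := \sum_y mu y * F y.
pose f y := F y - c.
have f_mean0 : \sum_y mu y * f y = 0.
  under eq_bigr do rewrite mulrBr.
  by rewrite sumrB -big_distrl /= mu_sum1 mul1r subrr.
have [M f_sum_le] := mean0_kact_pow_sum_bounded f_mean0.
have cesaro_f : (fun T => T.+1%:R^-1 * \sum_(t < T.+1) kact_pow t F x) =
    (fun T => harmonic T * \sum_(t < T.+1) kact_pow t f x + c).
  apply/funext => T; rewrite /f.
  under [in RHS]eq_bigr do rewrite kact_powB kact_pow_cst.
  rewrite sumrB sumr_const card_ord /= mulrBr -[c *+ _]mulr_natr mulrCA.
  by rewrite mulVf ?pnatr_eq0 // mulr1 subrK.
have : (fun T => harmonic T * \sum_(t < T.+1) kact_pow t f x + c) @ \oo --> c.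
  rewrite -[X in _ --> X]add0r; apply: cvgD; last exact: cvg_cst.
  exact: (cvg_harmonicM_bounded (fun T => f_sum_le T.+1 x)).
rewrite -cesaro_f => lim; rewrite -cvg_shiftS; exact: lim.
Qed.

End MarkovOperator.

Section OptionPaths.
Variables (R : realType) (n : nat) (S A O : finType)
  (pi : O -> S -> A -> 'rV[R]_n -> R) (P : S -> A -> S -> R)
  (beta : O -> S -> R) (piO : S -> O -> R).
Hypotheses (pi_ge0 : forall o s a th, 0 <= pi o s a th)
  (pi_sum1 : forall o s th, \sum_a pi o s a th = 1)
  (pi_diff : forall o s a th, differentiable (pi o s a) th)
  (P_ge0 : forall s a s', 0 <= P s a s')
  (P_sum1 : forall s a, \sum_s' P s a s' = 1)
  (beta01 : forall o s, 0 <= beta o s <= 1)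
  (piO_ge0 : forall s o, 0 <= piO s o)
  (piO_sum1 : forall s, \sum_o piO s o = 1).

Local Notation opt := (opt_trans beta piO).
Local Notation ppf := (path_prob_from pi P beta piO).
Local Notation K := (so_kernel pi P beta piO).

Lemma opt_trans_ge0 o s' o' : 0 <= opt o s' o'.
Proof.
have /andP [b_ge0 b_le1] := beta01 o s'.
by rewrite addr_ge0 ?mulr_ge0 ?subr_ge0.
Qed.

Lemma opt_trans_sum1 o s' : \sum_o' opt o s' o' = 1.
Proof.
rewrite big_split -!big_distrr /= piO_sum1 (bigD1 o) //= eqxx big1 => [|o'].
  by rewrite addr0 !mulr1 subrK.
by move/negbTE ->.
Qed.

Lemma next_so_sum1 s a o : \sum_s' \sum_o' P s a s' * opt o s' o' = 1.
Proof.
rewrite -(P_sum1 s a); apply: eq_bigr => s' _.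
by rewrite -big_distrr /= opt_trans_sum1 mulr1.
Qed.

Lemma so_kernel_ge0 theta x y : 0 <= K theta x y.
Proof. by apply: sumr_ge0 => a _; rewrite !mulr_ge0 ?opt_trans_ge0. Qed.

Lemma so_kernel_sum1 theta x : \sum_y K theta x y = 1.
Proof.
rewrite sum_pair; under eq_bigr do rewrite exchange_big /=.
rewrite exchange_big /= -[RHS](pi_sum1 x.2 x.1 theta); apply: eq_bigr => a _.
rewrite -[RHS]mulr1 -(next_so_sum1 x.1 a x.2) big_distrr; apply: eq_bigr => s' _.
by rewrite big_distrr; apply: eq_bigr => o' _; rewrite /= mulrA.
Qed.

Lemma path_prob_from_ge0 th x ys : 0 <= ppf th x ys.
Proof.
elim: ys x => [|[[s' o'] a'] ys IH] [[s o] a] /=; first exact: pi_ge0.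
by rewrite !mulr_ge0 ?opt_trans_ge0.
Qed.

Variable theta : 'rV[R]_n.

Definition score v o s a := 'D_v (fun th => ln (pi o s a th)) theta.

Definition path_score v (l : seq (S * O * A)) :=
  \sum_(x <- l) score v x.1.2 x.1.1 x.2.

Lemma path_score_cons v x l :
  path_score v (x :: l) = score v x.1.2 x.1.1 x.2 + path_score v l.
Proof. exact: big_cons. Qed.

(* At a zero of [pi] the (junk) score is multiplied by 0, and the derivative
   of [pi] vanishes there because [pi >= 0] attains its minimum. *)
Lemma pi_score v o s a : pi o s a theta * score v o s a = 'D_v (pi o s a) theta.
Proof.
have [pi0|pi_gt0] := eqVneq (pi o s a theta) 0.
  by rewrite pi0 mul0r derive_at_min // => th; rewrite pi0.
have pi_gt0' : 0 < pi o s a theta by rewrite lt0r pi_gt0 pi_ge0.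
have dpi : derivable (pi o s a) theta v by exact/diff_derivable/pi_diff.
by rewrite /score derive_ln // mulrC divfK.
Qed.

Lemma is_derive_pi v o s a :
  is_derive theta v (pi o s a) (pi o s a theta * score v o s a).
Proof. by rewrite pi_score; apply/derivableP/diff_derivable/pi_diff. Qed.

Lemma is_derive_path_prob_from v x ys :
  is_derive theta v (fun th => ppf th x ys)
    (ppf theta x ys * path_score v (x :: ys)).
Proof.
elim: ys x => [|[[s' o'] a'] ys IH] [[s o] a].
  by rewrite /path_score big_seq1; exact: is_derive_pi.
pose c := P s a s' * opt o s' o'.
have -> : (fun th => ppf th (s, o, a) ((s', o', a') :: ys)) =
    c \*: (pi o s a * (fun th => ppf th (s', o', a') ys)).
  by apply/funext => th /=; rewrite /c /GRing.scale /= mulrfctE; ring.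
apply: is_derive_eq.
  exact: (is_deriveZ c (is_deriveM (is_derive_pi v o s a) (IH (s', o', a')))).
by rewrite !path_score_cons /c /GRing.scale /=; ring.
Qed.

Lemma sum_pi_score v o s : \sum_a pi o s a theta * score v o s a = 0.
Proof.
under eq_bigr do rewrite pi_score.
have dpi a : is_derive theta v (pi o s a) ('D_v (pi o s a) theta).
  exact/derivableP/diff_derivable/pi_diff.
have := is_derive_bigsum dpi.
have -> : (fun th => \sum_a pi o s a th) = cst 1.
  by apply/funext => th; exact: pi_sum1.
by move=> dsum; rewrite -(@derive_val _ _ _ _ _ _ _ dsum) derive_cst.
Qed.

Definition path_expect m s o (g : seq (S * O * A) -> R) :=
  \sum_a \sum_(ys : m.-tuple (S * O * A)) ppf theta (s, o, a) ys * g ((s, o, a) :: ys).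

Lemma path_expect0 s o g :
  path_expect 0%N s o g = \sum_a pi o s a theta * g [:: (s, o, a)].
Proof.
apply: eq_bigr => a _.
by rewrite (sum_tuple0 (fun ys => ppf theta (s, o, a) ys * g ((s, o, a) :: ys))).
Qed.

Lemma path_expectS m s o g :
  path_expect m.+1 s o g = \sum_a pi o s a theta * \sum_s' \sum_o'
    P s a s' * opt o s' o' * path_expect m s' o' (fun l => g ((s, o, a) :: l)).
Proof.
apply: eq_bigr => a _.
rewrite (sum_tupleS m (fun ys => ppf theta (s, o, a) ys * g ((s, o, a) :: ys))).
rewrite sum_pair sum_pair big_distrr; apply: eq_bigr => s' _.
rewrite big_distrr; apply: eq_bigr => o' _.
rewrite !big_distrr; apply: eq_bigr => a' _.
rewrite !big_distrr; apply: eq_bigr => ys _ /=.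
ring.
Qed.

Lemma path_expectD m s o g1 g2 :
  path_expect m s o (fun l => g1 l + g2 l) =
  path_expect m s o g1 + path_expect m s o g2.
Proof.
rewrite -big_split; apply: eq_bigr => a _.
by rewrite -big_split; apply: eq_bigr => ys _; rewrite mulrDr.
Qed.

Lemma path_expectZ m s o c g :
  path_expect m s o (fun l => c * g l) = c * path_expect m s o g.
Proof.
rewrite big_distrr; apply: eq_bigr => a _.
by rewrite big_distrr; apply: eq_bigr => ys _; rewrite mulrCA.
Qed.

Lemma kact_so_kernel W s o : kact (K theta) W (s, o) =
  \sum_a pi o s a theta * \sum_s' \sum_o' P s a s' * opt o s' o' * W (s', o').
Proof.
rewrite /kact sum_pair.
under eq_bigr do under eq_bigr do rewrite /so_kernel big_distrl /=.
under eq_bigr do rewrite exchange_big /=.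
rewrite exchange_big /=; apply: eq_bigr => a _.
rewrite big_distrr; apply: eq_bigr => s' _.
by rewrite big_distrr; apply: eq_bigr => o' _; rewrite /= !mulrA.
Qed.

Lemma path_expectS_kact m s o g (h : A -> R) (W : S * O -> R) :
  (forall a s' o',
     path_expect m s' o' (fun l => g ((s, o, a) :: l)) = h a + W (s', o')) ->
  path_expect m.+1 s o g = \sum_a pi o s a theta * h a + kact (K theta) W (s, o).
Proof.
move=> g_split; rewrite path_expectS kact_so_kernel -big_split.
apply: eq_bigr => a _ /=; rewrite -mulrDr; congr (_ * _).
rewrite -[h a]mulr1 -(next_so_sum1 s a o) big_distrr -big_split.
apply: eq_bigr => s' _ /=.
rewrite big_distrr -big_split; apply: eq_bigr => o' _ /=.
by rewrite g_split; ring.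
Qed.

Lemma path_expect1 m s o : path_expect m s o (fun=> 1) = 1.
Proof.
elim: m s o => [|m IH] s o.
  rewrite path_expect0 -[RHS](pi_sum1 o s theta).
  by apply: eq_bigr => a _; rewrite mulr1.
rewrite (path_expectS_kact (h := fun=> 1) (W := fun=> 0)) => [|a s' o'].
  rewrite kact0 addr0 -[RHS](pi_sum1 o s theta).
  by apply: eq_bigr => a _; rewrite mulr1.
by rewrite IH addr0.
Qed.

Lemma path_expect_score v m s o : path_expect m s o (path_score v) = 0.
Proof.
elim: m s o => [|m IH] s o.
  rewrite path_expect0 -[RHS](sum_pi_score v o s); apply: eq_bigr => a _.
  by rewrite /path_score big_seq1.
rewrite (path_expectS_kact (h := score v o s) (W := fun=> 0)) => [|a s' o'].
  by rewrite sum_pi_score kact0 addr0.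
have -> : (fun l => path_score v ((s, o, a) :: l)) =
    (fun l => score v o s a * 1 + path_score v l).
  by apply/funext => l; rewrite path_score_cons mulr1.
by rewrite path_expectD path_expectZ path_expect1 IH mulr1 addr0.
Qed.

Definition fisher_so vi vj (x : S * O) :=
  \sum_a pi x.2 x.1 a theta * score vi x.2 x.1 a * score vj x.2 x.1 a.

Lemma path_expect_score2 vi vj m s o :
  path_expect m s o (fun l => path_score vi l * path_score vj l) =
  \sum_(t < m.+1) kact_pow (K theta) t (fisher_so vi vj) (s, o).
Proof.
elim: m s o => [|m IH] s o.
  rewrite path_expect0 big_ord1 kact_pow0 /fisher_so; apply: eq_bigr => a _ /=.
  by rewrite /path_score !big_seq1 /= mulrA.
pose V y := \sum_(t < m.+1) kact_pow (K theta) t (fisher_so vi vj) y.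
rewrite (path_expectS_kact (h := fun a => score vi o s a * score vj o s a) (W := V)).
  rewrite big_ord_recl kact_pow0; congr (_ + _).
    by apply: eq_bigr => a _; rewrite mulrA.
  under [RHS]eq_bigr do rewrite lift0 kact_powSl.
  rewrite /kact exchange_big /=; apply: eq_bigr => y _.
  by rewrite big_distrr.
move=> a s' o'.
have -> : (fun l => path_score vi ((s, o, a) :: l) * path_score vj ((s, o, a) :: l)) =
    (fun l => score vi o s a * score vj o s a * 1 +
       (score vi o s a * path_score vj l +
          (score vj o s a * path_score vi l + path_score vi l * path_score vj l))).
  by apply/funext => l; rewrite !path_score_cons /=; ring.
rewrite !path_expectD !path_expectZ path_expect1 !path_expect_score IH.
by rewrite mulr1 !mulr0 !add0r.
Qed.

Definition path_fisher s0 o0 vi vj (l : seq (S * O * A)) :=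
  path_prob pi P beta piO s0 o0 theta l
  * 'D_vi (fun th => ln (path_prob pi P beta piO s0 o0 th l)) theta
  * 'D_vj (fun th => ln (path_prob pi P beta piO s0 o0 th l)) theta.

Lemma fisher_T_path_fisher s0 o0 T i j :
  fisher_T pi P beta piO s0 o0 theta T i j =
  \sum_(xs : T.-tuple (S * O * A)) path_fisher s0 o0 (coord_dir R i) (coord_dir R j) xs.
Proof. by []. Qed.

Lemma path_fisher_cons s0 o0 vi vj x ys :
  path_fisher s0 o0 vi vj (x :: ys) = ((x.1.1 == s0) && (x.1.2 == o0))%:R
    * (ppf theta x ys * (path_score vi (x :: ys) * path_score vj (x :: ys))).
Proof.
rewrite /path_fisher /path_prob /=; case: (_ && _); last by rewrite !mul0r.
have -> : (fun th => ln (1 * ppf th x ys)) = (fun th => ln (ppf th x ys)).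
  by apply/funext => th; rewrite mul1r.
rewrite !mul1r; have [p0|p_neq0] := eqVneq (ppf theta x ys) 0.
  by rewrite p0 !mul0r.
have p_gt0 : 0 < ppf theta x ys by rewrite lt0r p_neq0 path_prob_from_ge0.
have dln v : 'D_v (fun th => ln (ppf th x ys)) theta = path_score v (x :: ys).
  have [dp Dp] := is_derive_path_prob_from v x ys.
  by rewrite derive_ln // Dp mulrC mulKf.
by rewrite !dln mulrA.
Qed.

Lemma fisher_T_kact_pow s0 o0 T i j :
  fisher_T pi P beta piO s0 o0 theta T i j =
  \sum_(t < T)
    kact_pow (K theta) t (fisher_so (coord_dir R i) (coord_dir R j)) (s0, o0).
Proof.
rewrite fisher_T_path_fisher; case: T => [|T].
  by rewrite sum_tuple0 big_ord0 /path_fisher (derive_cst (ln (1 : R))) mulr0 mul0r.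
rewrite sum_tupleS -path_expect_score2 sum_pair sum_pair.
rewrite -[RHS](sum_pair_delta s0 o0 (fun s o => path_expect T s o _)).
apply: eq_bigr => s _; apply: eq_bigr => o _; rewrite big_distrr.
apply: eq_bigr => a _; rewrite big_distrr.
by apply: eq_bigr => ys _; rewrite path_fisher_cons.
Qed.

End OptionPaths.

Theorem theorem1 (R : realType) (n : nat) (S A O : finType)
  (pi : O -> S -> A -> 'rV[R]_n -> R) (P : S -> A -> S -> R)
  (beta : O -> S -> R) (piO : S -> O -> R)
  (s0 : S) (o0 : O) (theta : 'rV[R]_n) (mu : S -> O -> R)
  (hpi_ge0 : forall o s a th, 0 <= pi o s a th)
  (hpi_sum1 : forall o s th, \sum_(a : A) pi o s a th = 1)
  (hpi_diff : forall o s a th, differentiable (pi o s a) th)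
  (hP_ge0 : forall s a s', 0 <= P s a s')
  (hP_sum1 : forall s a, \sum_(s' : S) P s a s' = 1)
  (hbeta : forall o s, 0 <= beta o s <= 1)
  (hpiO_ge0 : forall s o, 0 <= piO s o)
  (hpiO_sum1 : forall s, \sum_(o : O) piO s o = 1)
  (herg : ergodic_chain (so_kernel pi P beta piO theta))
  (hmu : stationary_so pi P beta piO theta mu) :
  forall i j : 'I_n,
    (fun T : nat => (T%:R)^-1 * fisher_T pi P beta piO s0 o0 theta T i j)
      @ \oo --> fisher_avg pi mu theta i j.
Proof.
move=> i j; case: hmu => mu_ge0 [mu_sum1 mu_stat].
pose K := so_kernel pi P beta piO theta.
pose F := fisher_so pi theta (coord_dir R i) (coord_dir R j).
have -> : (fun T => T%:R^-1 * fisher_T pi P beta piO s0 o0 theta T i j) =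
    (fun T => T%:R^-1 * \sum_(t < T) kact_pow K t F (s0, o0)).
  by apply/funext => T; rewrite fisher_T_kact_pow.
have -> : fisher_avg pi mu theta i j = \sum_x mu x.1 x.2 * F x by rewrite sum_pair.
apply: (@cesaro_kact_pow_cvg _ _ K _ _ (fun x => mu x.1 x.2)).
- exact: so_kernel_ge0.
- exact: so_kernel_sum1.
- by move=> x; exact: mu_ge0.
- by rewrite sum_pair.
- by move=> y; rewrite sum_pair; exact: mu_stat.
- exact: (proj1 herg).
Qed.
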